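(* Assume A2, let $x\in\mathcal I$ and suppose the $x$-threshold word $\pi$ exists. Then $\pi$ is a valid word.
   Context: Words are finite strings over $\{0,1\}$; $w^\omega$ is the infinite repetition of $w$. Let $\mathcal I\subseteq\mathbb R$ be an interval and $\phi_0,\phi_1:\mathcal I\to\mathcal I$. For a word $w$ put $\phi_w:=\phi_{w_{|w|}}\circ\cdots\circ\phi_{w_1}$ (first letter applied first), $\phi_\epsilon=\mathrm{id}$. Assumption A2: for all $x<y$ in $\mathcal I$ and $k\in\{0,1\}$, $\phi_k(x)<\phi_k(y)$ and $\phi_k(y)-\phi_k(x)<y-x$; moreover $\phi_0,\phi_1$ have fixed points $y_0,y_1\in\mathcal I$ with $y_1<y_0$. The $x$-threshold orbit is the sequence $(x_k)_{k\ge1}$ with $x_1=\phi_1(x)$ and $x_{k+1}=\phi_1(x_k)$ if $x_k\ge x$, $x_{k+1}=\phi_0(x_k)$ if $x_k<x$. The $x$-threshold word is the shortest non-empty finite word $\pi$ such that $x_{k+1}=\phi_{(\pi^\omega)_k}(x_k)$ for all $k\ge1$, when such a word exists. For $p\ge1$, $L_p$ and $R_p$ are the word morphisms determined by $L_p(0)=0^{p+1}1$, $L_p(1)=0^p1$, $R_p(0)=01^p$, $R_p(1)=01^{p+1}$. The set of valid words is the smallest set of words containing $0$ and $1$ and closed under $L_p$ and $R_p$ for all $p\ge1$ (these are exactly the Christoffel words). *)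

From Stdlib Require Import Reals Lra List.
Import ListNotations.
Open Scope R_scope.

(* Words over {0,1}: false = letter 0, true = letter 1. *)
Definition word := list bool.

Definition phik (phi0 phi1 : R -> R) (k : bool) : R -> R :=
  if k then phi1 else phi0.

(* phi_w := phi_{w_|w|} o ... o phi_{w_1} (first letter applied first) *)
Definition phiw (phi0 phi1 : R -> R) (w : word) (y : R) : R :=
  fold_left (fun acc k => phik phi0 phi1 k acc) w y.

Definition is_interval (I : R -> Prop) : Prop :=
  forall a b c, I a -> I c -> a <= b -> b <= c -> I b.

Definition A2 (I : R -> Prop) (phi0 phi1 : R -> R) : Prop :=
  (forall k y, I y -> I (phik phi0 phi1 k y)) /\
  (forall k y z, I y -> I z -> y < z ->
      phik phi0 phi1 k y < phik phi0 phi1 k z /\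
      phik phi0 phi1 k z - phik phi0 phi1 k y < z - y) /\
  (exists y0 y1, I y0 /\ I y1 /\ phi0 y0 = y0 /\ phi1 y1 = y1 /\ y1 < y0).

(* x-threshold orbit, 0-indexed: orbit n = x_{n+1}. *)
Fixpoint orbit (phi0 phi1 : R -> R) (x : R) (n : nat) : R :=
  match n with
  | O => phi1 x
  | S m => let xm := orbit phi0 phi1 x m in
           if Rle_dec x xm then phi1 xm else phi0 xm
  end.

(* (w^omega)_k with 1-indexed k, written here 0-indexed:
   letter n (0-indexed) of w^omega is nth (n mod |w|) w. *)
Definition omega_letter (w : word) (n : nat) : bool :=
  nth (Nat.modulo n (length w)) w false.

Definition generates_orbit (phi0 phi1 : R -> R) (x : R) (pi : word) : Prop :=
  pi <> @nil bool /\
  forall n : nat,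
    orbit phi0 phi1 x (S n) = phik phi0 phi1 (omega_letter pi n) (orbit phi0 phi1 x n).

Definition threshold_word (phi0 phi1 : R -> R) (x : R) (pi : word) : Prop :=
  generates_orbit phi0 phi1 x pi /\
  forall pi', generates_orbit phi0 phi1 x pi' -> (length pi <= length pi')%nat.

Definition Lmorph (p : nat) (w : word) : word :=
  flat_map (fun b : bool => if b then List.repeat false p ++ [true]
                     else List.repeat false (S p) ++ [true]) w.
Definition Rmorph (p : nat) (w : word) : word :=
  flat_map (fun b : bool => if b then false :: List.repeat true (S p)
                     else false :: List.repeat true p) w.

Inductive valid : word -> Prop :=
  | valid0 : valid [false]
  | valid1 : valid [true]
  | validL : forall p w, (1 <= p)%nat -> valid w -> valid (Lmorph p w)
  | validR : forall p w, (1 <= p)%nat -> valid w -> valid (Rmorph p w).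

(* If x <= y1 or x >= y0 the orbit uses a single letter.  Otherwise it stays in [s, u) with
   s = phi1 x and u = phi0 x, where phi0 on [s, x] and phi1 on [x, u] are increasing contractions
   with phi0 x = u and phi1 x = s.  For such a pair (g0, g1) with threshold t, the first return
   to [s, g1 u) (when g1 u <= t) or to [s, t) (otherwise) is again such a pair, once the intermediate
   value theorem has located its threshold, and the itinerary of the orbit is the image of the
   induced itinerary under L_p, resp. R_p, where p counts the steps spent in one branch.  The
   blocks of L_p and R_p force every period of the image to end at a block boundary, so the
   shortest period word is the image of the shortest period word of the induced itinerary.
   Induction on its length ends with a constant itinerary, i.e. a one-letter word. *)

From Stdlib Require Import Reals Lra Lia List Classical Wf_nat FunctionalExtensionality.
Import ListNotations.
Open Scope R_scope.

Lemma least_witness (P : nat -> Prop) :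
  (exists n, P n) -> exists n, P n /\ forall m, P m -> (n <= m)%nat.
Proof.
  intros HP.
  destruct (dec_inh_nat_subset_has_unique_least_element P (fun n => classic (P n)) HP)
    as [n [[Pn Hn] _]].
  eauto.
Qed.

Definition periodic (c : nat -> bool) (N : nat) : Prop := forall n, c (n + N)%nat = c n.

Definition constant (c : nat -> bool) : Prop := forall n, c n = c 0%nat.

Definition period_word (w : word) (c : nat -> bool) : Prop :=
  w <> [] /\ forall n, c n = omega_letter w n.

Definition min_period_word (w : word) (c : nat -> bool) : Prop :=
  period_word w c /\ forall w', period_word w' c -> (length w <= length w')%nat.

Lemma period_word_length_pos w c : period_word w c -> (0 < length w)%nat.
Proof. intros [Hw _]. destruct w; simpl; [congruence | lia]. Qed.

Lemma period_word_periodic w c : period_word w c -> periodic c (length w).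
Proof.
  intros Hw n. pose proof (period_word_length_pos _ _ Hw).
  destruct Hw as [_ Hc]. rewrite !Hc. unfold omega_letter.
  replace (n + length w)%nat with (n + 1 * length w)%nat by lia.
  now rewrite Nat.Div0.mod_add.
Qed.

Lemma period_word_nth w c n : period_word w c -> (n < length w)%nat -> c n = nth n w false.
Proof. intros [_ Hc] Hn. rewrite Hc. unfold omega_letter. now rewrite Nat.mod_small. Qed.

Lemma periodic_mod c N : (0 < N)%nat -> periodic c N -> forall n, c n = c (n mod N).
Proof.
  intros HN Hc.
  assert (Hk : forall k r, c (r + k * N)%nat = c r).
  { induction k as [|k IH]; intros r; [now rewrite Nat.add_0_r|].
    replace (r + S k * N)%nat with (r + k * N + N)%nat by lia. now rewrite Hc. }
  intros n. rewrite (Nat.div_mod_eq n N) at 1.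
  replace (N * (n / N) + n mod N)%nat with (n mod N + n / N * N)%nat by lia.
  apply Hk.
Qed.

Lemma period_word_of_periodic c w :
  (0 < length w)%nat -> periodic c (length w) ->
  (forall n, (n < length w)%nat -> c n = nth n w false) -> period_word w c.
Proof.
  intros Hw Hc Hpre. split.
  - intros ->. simpl in Hw. lia.
  - intros n. unfold omega_letter. rewrite (periodic_mod c _ Hw Hc n).
    apply Hpre, Nat.mod_upper_bound. lia.
Qed.

Lemma prefix_period_word c m : (0 < m)%nat -> periodic c m -> period_word (map c (seq 0 m)) c.
Proof.
  intros Hm Hc. rewrite <- (length_seq m 0) in Hm, Hc at 1. rewrite <- (length_map c) in Hm, Hc.
  apply period_word_of_periodic; auto.
  intros n Hn. rewrite length_map, length_seq in Hn.
  rewrite nth_indep with (d' := c 0%nat) by (rewrite length_map, length_seq; lia).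
  rewrite map_nth, seq_nth; [reflexivity | lia].
Qed.

Lemma min_period_word_exists c w : period_word w c -> exists w', min_period_word w' c.
Proof.
  intros Hw.
  destruct (least_witness (fun n => exists w', period_word w' c /\ length w' = n))
    as (n & (w' & Hw' & <-) & Hmin); [eauto|].
  exists w'. split; [exact Hw'|]. intros w'' Hw''. apply Hmin. eauto.
Qed.

Lemma min_period_word_unique c w1 w2 :
  min_period_word w1 c -> min_period_word w2 c -> w1 = w2.
Proof.
  intros [G1 M1] [G2 M2].
  assert (E : length w1 = length w2) by (specialize (M1 _ G2); specialize (M2 _ G1); lia).
  apply nth_ext with false false; auto.
  intros n Hn. rewrite <- (period_word_nth _ _ n G1 Hn). apply period_word_nth; [exact G2 | lia].
Qed.

Lemma valid_of_length_one w : w <> [] -> (length w <= 1)%nat -> valid w.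
Proof.
  intros Hw Hl. destruct w as [|[] [|]]; simpl in Hl; try congruence; try lia; constructor.
Qed.

Lemma min_period_word_constant_valid c w : constant c -> min_period_word w c -> valid w.
Proof.
  intros Hc [[Hw _] Hmin]. apply valid_of_length_one; [exact Hw|].
  apply (Hmin [c 0%nat]). split; [discriminate|].
  intros n. unfold omega_letter. simpl length. rewrite Nat.mod_1_r. apply Hc.
Qed.

Section Blocks.

Variable blk : bool -> word.
Hypothesis blk_long : forall b, (2 <= length (blk b))%nat.

Fixpoint block_start (c' : nat -> bool) (j : nat) : nat :=
  match j with O => O | S k => (block_start c' k + length (blk (c' k)))%nat end.

Definition block_coding (c c' : nat -> bool) : Prop :=
  forall j i, (i < length (blk (c' j)))%nat ->
    c (block_start c' j + i)%nat = nth i (blk (c' j)) false.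

Lemma block_start_grows c' j k :
  (j <= k)%nat -> (block_start c' j + 2 * (k - j) <= block_start c' k)%nat.
Proof.
  intros Hjk. induction Hjk as [|k Hjk IH]; [rewrite Nat.sub_diag; lia|].
  cbn [block_start]. pose proof (blk_long (c' k)). lia.
Qed.

Lemma block_start_cover c' n :
  exists j i, (i < length (blk (c' j)))%nat /\ n = (block_start c' j + i)%nat.
Proof.
  induction n as [|n (j & i & Hi & ->)].
  - exists 0%nat, 0%nat. pose proof (blk_long (c' 0%nat)). split; [lia | reflexivity].
  - destruct (Nat.lt_ge_cases (S i) (length (blk (c' j)))).
    + exists j, (S i). split; [assumption | lia].
    + exists (S j), 0%nat. pose proof (blk_long (c' (S j))). simpl. split; lia.
Qed.

Lemma block_start_add_period c' M :
  periodic c' M -> forall j, block_start c' (j + M) = (block_start c' j + block_start c' M)%nat.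
Proof. intros Hc j. induction j as [|j IH]; [reflexivity|]. simpl. rewrite IH, Hc. lia. Qed.

Lemma block_start_succ c' j :
  block_start c' (S j) = (length (blk (c' 0%nat)) + block_start (fun k => c' (S k)) j)%nat.
Proof. induction j as [|j IH]; simpl in *; lia. Qed.

Lemma block_start_flat_map w c' :
  (forall k, (k < length w)%nat -> c' k = nth k w false) ->
  block_start c' (length w) = length (flat_map blk w) /\
  forall j i, (j < length w)%nat -> (i < length (blk (c' j)))%nat ->
    nth (block_start c' j + i) (flat_map blk w) false = nth i (blk (c' j)) false.
Proof.
  revert c'. induction w as [|a w IH]; intros c' Hc; [split; [reflexivity | simpl; lia]|].
  assert (H0 : c' 0%nat = a) by (apply (Hc 0%nat); simpl; lia).
  destruct (IH (fun k => c' (S k))) as [IH1 IH2]; [intros k Hk; apply (Hc (S k)); simpl; lia|].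
  split.
  - simpl length. rewrite block_start_succ, IH1, H0. simpl. now rewrite length_app.
  - intros [|j] i Hj Hi; simpl flat_map.
    + simpl. rewrite H0 in *. now rewrite app_nth1.
    + rewrite block_start_succ, H0, app_nth2 by lia.
      replace (length (blk a) + block_start (fun k => c' (S k)) j + i - length (blk a))%nat
        with (block_start (fun k => c' (S k)) j + i)%nat by lia.
      apply IH2; [simpl in Hj; lia | assumption].
Qed.

Section Coding.

Variables c c' : nat -> bool.
Hypothesis Hcode : block_coding c c'.

Lemma periodic_of_block_period M : periodic c' M -> periodic c (block_start c' M).
Proof.
  intros Hc' n. destruct (block_start_cover c' n) as (j & i & Hi & ->).
  replace (block_start c' j + i + block_start c' M)%nat with (block_start c' (j + M) + i)%nat
    by (rewrite block_start_add_period; auto; lia).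
  rewrite !Hcode; rewrite ?Hc'; auto.
Qed.

Hypothesis Hrecognize : exists d, forall j, c (block_start c' j + d)%nat = c' j.

Lemma block_period_of_periodic N m :
  periodic c N -> block_start c' m = N -> periodic c' m.
Proof.
  intros Hc Hm. destruct Hrecognize as [d Hd].
  enough (H : forall j,
             block_start c' (j + m) = (block_start c' j + N)%nat /\ c' (j + m)%nat = c' j)
    by (intro j; apply H).
  induction j as [|j [E1 E2]].
  - simpl. split; [exact Hm|]. rewrite <- (Hd m), <- (Hd 0%nat), Hm. simpl.
    rewrite Nat.add_comm. apply Hc.
  - assert (E3 : c' (S j + m)%nat = c' (S j)).
    { rewrite <- (Hd (S j + m)%nat), <- (Hd (S j)). simpl. rewrite E1, E2.
      replace (block_start c' j + N + length (blk (c' j)) + d)%nat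
        with (block_start c' j + length (blk (c' j)) + d + N)%nat by lia.
      apply Hc. }
    split; [|exact E3]. simpl. rewrite E1, E2. lia.
Qed.

Hypothesis Haligned :
  forall N, (0 < N)%nat -> periodic c N -> exists m, block_start c' m = N.

Lemma period_word_desubstitute w :
  period_word w c -> exists m, (0 < m)%nat /\ block_start c' m = length w /\
    period_word (map c' (seq 0 m)) c'.
Proof.
  intros Hw. pose proof (period_word_length_pos _ _ Hw) as Hpos.
  destruct (Haligned _ Hpos (period_word_periodic _ _ Hw)) as [m Hm].
  assert (Hm0 : (0 < m)%nat) by (destruct m; simpl in Hm; lia).
  exists m. split; [exact Hm0|]. split; [exact Hm|].
  apply prefix_period_word; [exact Hm0|].
  exact (block_period_of_periodic _ m (period_word_periodic _ _ Hw) Hm).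
Qed.

Lemma period_word_flat_map w' : period_word w' c' -> period_word (flat_map blk w') c.
Proof.
  intros Hw'. pose proof (period_word_length_pos _ _ Hw') as Hpos.
  destruct (block_start_flat_map w' c' (fun k => period_word_nth _ _ k Hw')) as [F1 F2].
  assert (Hlen : (0 < length (flat_map blk w'))%nat).
  { rewrite <- F1. pose proof (block_start_grows c' 0 (length w')). simpl in *. lia. }
  apply period_word_of_periodic; [exact Hlen | |].
  - rewrite <- F1. apply periodic_of_block_period, period_word_periodic, Hw'.
  - intros n Hn. destruct (block_start_cover c' n) as (j & i & Hi & ->).
    assert (Hj : (j < length w')%nat).
    { destruct (Nat.lt_ge_cases j (length w')) as [|Hj]; [assumption|].
      pose proof (block_start_grows c' _ _ Hj). lia. }
    rewrite Hcode by exact Hi. symmetry. now apply F2.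
Qed.

Theorem min_period_word_flat_map w :
  min_period_word w c ->
  exists w', min_period_word w' c' /\ (length w' < length w)%nat /\ w = flat_map blk w'.
Proof.
  intros [Hw Hmin].
  destruct (period_word_desubstitute w Hw) as (m & Hm & Em & Hpm).
  destruct (min_period_word_exists _ _ Hpm) as [w' [Hw' Hmin']].
  pose proof (Hmin' _ Hpm) as Hle. rewrite length_map, length_seq in Hle.
  exists w'. split; [split; assumption|]. split.
  - pose proof (block_start_grows c' 0 m). simpl in *. lia.
  - apply (min_period_word_unique c); [split; assumption|]. split.
    + now apply period_word_flat_map.
    + intros w2 Hw2. destruct (period_word_desubstitute w2 Hw2) as (m2 & _ & E2 & Hp2).
      pose proof (Hmin' _ Hp2) as Hle2. rewrite length_map, length_seq in Hle2.
      destruct (block_start_flat_map w' c' (fun k => period_word_nth _ _ k Hw')) as [F1 _].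
      pose proof (block_start_grows c' _ _ Hle2). lia.
Qed.

End Coding.

End Blocks.

Definition blockL (p : nat) (b : bool) : word :=
  if b then repeat false p ++ [true] else repeat false (S p) ++ [true].
Definition blockR (p : nat) (b : bool) : word :=
  if b then false :: repeat true (S p) else false :: repeat true p.

Lemma blockL_length p b : length (blockL p b) = (if b then S p else S (S p)).
Proof. destruct b; simpl; rewrite length_app, repeat_length; simpl; lia. Qed.
Lemma blockR_length p b : length (blockR p b) = (if b then S (S p) else S p).
Proof. destruct b; simpl; rewrite repeat_length; lia. Qed.

Lemma nth_zeros_one_lt n j : (j < n)%nat -> nth j (repeat false n ++ [true]) false = false.
Proof. intros Hj. rewrite app_nth1 by (rewrite repeat_length; lia). apply nth_repeat. Qed.
Lemma nth_zeros_one_last n : nth n (repeat false n ++ [true]) false = true.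
Proof.
  rewrite app_nth2 by (rewrite repeat_length; lia). now rewrite repeat_length, Nat.sub_diag.
Qed.

Section LBlocks.

Variables (p : nat) (c c' : nat -> bool).
Hypothesis Hp : (1 <= p)%nat.
Hypothesis Hcode : block_coding (blockL p) c c'.

Lemma blockL_long b : (2 <= length (blockL p b))%nat.
Proof. rewrite blockL_length. destruct b; lia. Qed.

Lemma blockL_letter j : c (block_start (blockL p) c' j + p)%nat = c' j.
Proof.
  rewrite Hcode by (rewrite blockL_length; destruct (c' j); lia).
  unfold blockL. destruct (c' j); [apply nth_zeros_one_last | apply nth_zeros_one_lt; lia].
Qed.

(* A period ending strictly inside a block would move the final [1] of that block onto a [0] of
   the first block; this fails only when the first block is the shorter one and the other is not. *)
Lemma blockL_periods_aligned :
  (c' 0%nat = false \/ forall j, c' j = true) ->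
  forall N, (0 < N)%nat -> periodic c N -> exists m, block_start (blockL p) c' m = N.
Proof.
  intros Hfirst N HN Hc.
  destruct (block_start_cover _ blockL_long c' N) as (m & [|i] & Hi & E); [exists m; lia|].
  exfalso. set (k := (length (blockL p (c' m)) - 1)%nat).
  assert (Ek : c (block_start (blockL p) c' m + k)%nat = true).
  { rewrite Hcode by (unfold k; lia). unfold k. rewrite blockL_length. unfold blockL.
    destruct (c' m); rewrite Nat.sub_1_r; apply nth_zeros_one_last. }
  assert (Hki : (k - S i < length (blockL p (c' 0%nat)) - 1)%nat).
  { unfold k. rewrite !blockL_length in *.
    destruct Hfirst as [-> | Hall]; [destruct (c' m); lia | rewrite !Hall in *; lia]. }
  replace (block_start (blockL p) c' m + k)%nat with (0 + (k - S i) + N)%nat in Ek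
    by (unfold k in *; lia).
  rewrite Hc in Ek. change (0 + ?n)%nat with (block_start (blockL p) c' 0 + n)%nat in Ek.
  rewrite Hcode in Ek by lia.
  rewrite blockL_length in Hki. revert Ek Hki. unfold blockL.
  destruct (c' 0%nat); intros Ek Hki; rewrite nth_zeros_one_lt in Ek by lia; discriminate.
Qed.

Lemma min_period_word_Lmorph w :
  (c' 0%nat = false \/ forall j, c' j = true) -> min_period_word w c ->
  exists w', min_period_word w' c' /\ (length w' < length w)%nat /\ w = Lmorph p w'.
Proof.
  intros Hfirst. apply (min_period_word_flat_map _ blockL_long); [exact Hcode | |].
  - exists p. apply blockL_letter.
  - exact (blockL_periods_aligned Hfirst).
Qed.

End LBlocks.

Section RBlocks.

Variables (p : nat) (c c' : nat -> bool).
Hypothesis Hp : (1 <= p)%nat.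
Hypothesis Hcode : block_coding (blockR p) c c'.

Lemma blockR_long b : (2 <= length (blockR p b))%nat.
Proof. rewrite blockR_length. destruct b; lia. Qed.

Lemma blockR_letter j : c (block_start (blockR p) c' j + S p)%nat = c' j.
Proof.
  destruct (c' j) eqn:E.
  - rewrite Hcode by (rewrite blockR_length, E; lia).
    rewrite E. cbn [blockR nth]. apply nth_repeat_lt. lia.
  - replace (block_start (blockR p) c' j + S p)%nat with (block_start (blockR p) c' (S j) + 0)%nat
      by (cbn [block_start]; rewrite blockR_length, E; lia).
    rewrite Hcode by (rewrite blockR_length; destruct (c' (S j)); lia).
    now destruct (c' (S j)).
Qed.

(* Periods align because every block starts with its only [0]. *)
Lemma blockR_periods_aligned :
  forall N, (0 < N)%nat -> periodic c N -> exists m, block_start (blockR p) c' m = N.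
Proof.
  intros N HN Hc.
  destruct (block_start_cover _ blockR_long c' N) as (m & [|i] & Hi & E); [exists m; lia|].
  exfalso.
  assert (E0 : c N = false).
  { rewrite <- (Nat.add_0_l N), Hc.
    change (c 0%nat) with (c (block_start (blockR p) c' 0 + 0)%nat).
    rewrite Hcode by (pose proof (blockR_long (c' 0%nat)); lia).
    now destruct (c' 0%nat). }
  rewrite E, Hcode in E0 by exact Hi. rewrite blockR_length in Hi. revert E0 Hi. unfold blockR.
  destruct (c' m); cbn [nth]; intros E0 Hi; rewrite nth_repeat_lt in E0 by lia; discriminate.
Qed.

Lemma min_period_word_Rmorph w :
  min_period_word w c ->
  exists w', min_period_word w' c' /\ (length w' < length w)%nat /\ w = Rmorph p w'.
Proof.
  apply (min_period_word_flat_map _ blockR_long); [exact Hcode | |].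
  - exists (S p). apply blockR_letter.
  - exact blockR_periods_aligned.
Qed.

End RBlocks.

Definition increasing_contraction (f : R -> R) (a b : R) : Prop :=
  forall y z, a <= y -> y < z -> z <= b -> f y < f z /\ f z - f y < z - y.

Lemma increasing_contraction_le f a b y z :
  increasing_contraction f a b -> a <= y -> y <= z -> z <= b -> f y <= f z /\ f z - f y <= z - y.
Proof.
  intros Hf Hy Hyz Hz. destruct (Req_dec y z) as [->|Hne]; [lra|].
  destruct (Hf y z); lra.
Qed.

Lemma increasing_contraction_sub f a b a' b' :
  increasing_contraction f a b -> a <= a' -> b' <= b -> increasing_contraction f a' b'.
Proof. intros Hf Ha Hb y z Hy Hyz Hz. apply Hf; lra. Qed.

Lemma increasing_contraction_comp f g a b c d :
  increasing_contraction f a b -> increasing_contraction g c d ->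
  (forall y, a <= y <= b -> c <= f y <= d) ->
  increasing_contraction (fun y => g (f y)) a b.
Proof.
  intros Hf Hg Hfy y z Hy Hyz Hz.
  destruct (Hf y z Hy Hyz Hz) as [H1 H2].
  destruct (Hfy y) as [Hy1 _]; [lra|]. destruct (Hfy z) as [_ Hz1]; [lra|].
  destruct (Hg (f y) (f z)); lra.
Qed.

Lemma increasing_contraction_iter f g a b c d k :
  increasing_contraction f a b -> increasing_contraction g c d ->
  (forall j y, (j < k)%nat -> a <= y <= b -> c <= Nat.iter j g (f y) <= d) ->
  increasing_contraction (fun y => Nat.iter k g (f y)) a b.
Proof.
  intros Hf Hg. induction k as [|k IH]; intros Hrange; [exact Hf|].
  apply (increasing_contraction_comp (fun y => Nat.iter k g (f y)) g a b c d); auto.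
Qed.

Lemma increasing_contraction_ivt f a b c :
  a < b -> increasing_contraction f a b -> f a < c <= f b -> exists z, a < z <= b /\ f z = c.
Proof.
  intros Hab Hf [Ha Hb].
  set (clamp := fun x => Rmax a (Rmin x b)).
  assert (Hclamp : forall x, a <= clamp x <= b).
  { intros x. unfold clamp. split; [apply Rmax_l|].
    apply Rmax_lub; [lra | apply Rmin_r]. }
  assert (Hclamp_lip : forall x y, Rabs (clamp x - clamp y) <= Rabs (x - y)).
  { intros x y. unfold clamp, Rmax, Rmin.
    repeat destruct Rle_dec; unfold Rabs; repeat destruct Rcase_abs; lra. }
  set (h := fun x => f (clamp x) - c).
  (* Clamping to [[a, b]] keeps [f] 1-Lipschitz, hence [h] continuous on all of [R]. *)
  assert (Hcont : continuity h).
  { intros x eps Heps. exists eps. split; [exact Heps|]. intros y [_ Hy]. simpl in *.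
    unfold Rdist, h in *. eapply Rle_lt_trans; [|exact Hy].
    eapply Rle_trans; [|apply Hclamp_lip].
    destruct (Hclamp x), (Hclamp y).
    destruct (Rle_dec (clamp x) (clamp y)) as [L|L];
      [destruct (increasing_contraction_le f a b (clamp x) (clamp y) Hf)
      |destruct (increasing_contraction_le f a b (clamp y) (clamp x) Hf)]; try lra;
      unfold Rabs; repeat destruct Rcase_abs; lra. }
  assert (Eb : clamp b = b) by (unfold clamp; rewrite Rmin_left, Rmax_right; lra).
  assert (Ea : clamp a = a) by (unfold clamp; rewrite Rmin_left, Rmax_left; lra).
  destruct (Req_dec (f b) c) as [E|E]; [exists b; lra|].
  destruct (IVT h a b Hcont Hab) as (z & Hz & Ez); unfold h; [rewrite Ea; lra | rewrite Eb; lra|].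
  unfold h, clamp in Ez. rewrite Rmin_left, Rmax_right in Ez by lra.
  exists z. split; [|lra]. split; [|lra].
  destruct (Req_dec z a) as [->|]; lra.
Qed.

Lemma escape_up f a t d :
  0 < d -> (forall y, a <= y <= t -> y + d <= f y) -> exists n, t < Nat.iter n f a.
Proof.
  intros Hd Hf. apply NNPP. intros Hno.
  assert (Hbelow : forall n, Nat.iter n f a <= t)
    by (intros n; apply Rnot_lt_le; intros H; apply Hno; eauto).
  assert (Hgrow : forall n, a + INR n * d <= Nat.iter n f a).
  { induction n as [|n IH]; [simpl; lra|].
    rewrite S_INR, Nat.iter_succ. pose proof (pos_INR n).
    assert (Hn : a <= Nat.iter n f a) by nra.
    pose proof (Hf _ (conj Hn (Hbelow n))). nra. }
  destruct (INR_archimed d (t - a) Hd) as [n Hn].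
  pose proof (Hgrow n). pose proof (Hbelow n). lra.
Qed.

Lemma escape_down f b t d :
  0 < d -> (forall y, t <= y <= b -> f y <= y - d) -> exists n, Nat.iter n f b < t.
Proof.
  intros Hd Hf. apply NNPP. intros Hno.
  assert (Habove : forall n, t <= Nat.iter n f b)
    by (intros n; apply Rnot_lt_le; intros H; apply Hno; eauto).
  assert (Hdrop : forall n, Nat.iter n f b <= b - INR n * d).
  { induction n as [|n IH]; [simpl; lra|].
    rewrite S_INR, Nat.iter_succ. pose proof (pos_INR n).
    assert (Hn : Nat.iter n f b <= b) by nra.
    pose proof (Hf _ (conj (Habove n) Hn)). nra. }
  destruct (INR_archimed d (b - t) Hd) as [n Hn].
  pose proof (Hdrop n). pose proof (Habove n). lra.
Qed.

Definition letter (t y : R) : bool := if Rle_dec t y then true else false.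

Lemma letter_true t y : t <= y -> letter t y = true.
Proof. unfold letter. destruct Rle_dec; [reflexivity | lra]. Qed.

Lemma letter_false t y : y < t -> letter t y = false.
Proof. unfold letter. destruct Rle_dec; [lra | reflexivity]. Qed.

Lemma increasing_contraction_threshold G a b t z1 z2 :
  increasing_contraction G a b -> a <= z1 <= b -> a <= z2 <= b -> t <= G z1 -> G z2 < t ->
  exists t', z2 < t' <= z1 /\ G t' = t /\ forall z, a <= z <= b -> letter t (G z) = letter t' z.
Proof.
  intros HG Hz1 Hz2 H1 H2.
  assert (Hz : z2 < z1).
  { apply Rnot_le_lt. intros Hle.
    destruct (increasing_contraction_le G a b z1 z2 HG); lra. }
  destruct (increasing_contraction_ivt G z2 z1 t Hz) as (t' & Ht' & Et');
    [apply (increasing_contraction_sub G a b); [exact HG | lra | lra] | lra |].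
  exists t'. split; [exact Ht'|]. split; [exact Et'|].
  intros z Hzab. destruct (Rle_dec t' z) as [Hle|Hlt].
  - rewrite (letter_true t' z Hle). apply letter_true.
    destruct (increasing_contraction_le G a b t' z HG); lra.
  - rewrite (letter_false t' z) by lra. apply letter_false.
    destruct (HG z t'); lra.
Qed.

Fixpoint switch_orbit (g0 g1 : R -> R) (t z : R) (n : nat) : R :=
  match n with
  | O => z
  | S m => let y := switch_orbit g0 g1 t z m in phik g0 g1 (letter t y) y
  end.

Definition itinerary (g0 g1 : R -> R) (t z : R) (n : nat) : bool :=
  letter t (switch_orbit g0 g1 t z n).

Section SwitchOrbit.

Variables (g0 g1 : R -> R) (t : R).

Lemma switch_orbit_add z a n :
  switch_orbit g0 g1 t z (a + n) = switch_orbit g0 g1 t (switch_orbit g0 g1 t z a) n.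
Proof.
  induction n as [|n IH]; [now rewrite Nat.add_0_r|].
  rewrite Nat.add_succ_r. simpl. now rewrite IH.
Qed.

Lemma switch_orbit_recurrence (zs : nat -> R) :
  (forall n, zs (S n) = phik g0 g1 (letter t (zs n)) (zs n)) ->
  forall n, zs n = switch_orbit g0 g1 t (zs 0%nat) n.
Proof. intros Hrec n. induction n as [|n IH]; [reflexivity|]. simpl. now rewrite <- IH. Qed.

Lemma switch_orbit_below z k :
  (forall i, (i < k)%nat -> Nat.iter i g0 z < t) ->
  forall i, (i <= k)%nat -> switch_orbit g0 g1 t z i = Nat.iter i g0 z.
Proof.
  intros Hk i Hi. induction i as [|i IH]; [reflexivity|].
  simpl. rewrite IH by lia. now rewrite letter_false by (apply Hk; lia).
Qed.

Lemma switch_orbit_above z k :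
  z < t -> (forall i, (i < k)%nat -> t <= Nat.iter i g1 (g0 z)) ->
  forall i, (i <= k)%nat -> switch_orbit g0 g1 t z (S i) = Nat.iter i g1 (g0 z).
Proof.
  intros Hz Hk i Hi. induction i as [|i IH].
  - simpl. now rewrite letter_false.
  - change (switch_orbit g0 g1 t z (S (S i)))
      with (phik g0 g1 (letter t (switch_orbit g0 g1 t z (S i))) (switch_orbit g0 g1 t z (S i))).
    rewrite IH by lia. now rewrite letter_true by (apply Hk; lia).
Qed.

Lemma block_zeros_one z k :
  (forall i, (i < k)%nat -> Nat.iter i g0 z < t) -> t <= Nat.iter k g0 z ->
  (forall i, (i < S k)%nat ->
     letter t (switch_orbit g0 g1 t z i) = nth i (repeat false k ++ [true]) false) /\
  switch_orbit g0 g1 t z (S k) = g1 (Nat.iter k g0 z).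
Proof.
  intros Hk Htk. split.
  - intros i Hi. rewrite switch_orbit_below with (k := k) by (auto; lia).
    destruct (Nat.eq_dec i k) as [->|Hne].
    + rewrite nth_zeros_one_last. now apply letter_true.
    + rewrite nth_zeros_one_lt by lia. apply letter_false, Hk. lia.
  - simpl. rewrite switch_orbit_below with (k := k) by auto. now rewrite letter_true.
Qed.

Lemma block_zero_ones z k :
  z < t -> (forall i, (i < k)%nat -> t <= Nat.iter i g1 (g0 z)) ->
  (forall i, (i < S k)%nat ->
     letter t (switch_orbit g0 g1 t z i) = nth i (false :: repeat true k) false) /\
  switch_orbit g0 g1 t z (S k) = Nat.iter k g1 (g0 z).
Proof.
  intros Hz Hk. split.
  - intros [|i] Hi; [now apply letter_false|].
    rewrite switch_orbit_above with (k := k) by (auto; lia).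
    cbn [nth]. rewrite nth_repeat_lt by lia. apply letter_true, Hk. lia.
  - apply switch_orbit_above with (k := k); auto.
Qed.

Section Returns.

Variables (blk : bool -> word) (b : R -> bool) (D : R -> Prop).

Fixpoint returns (s : R) (j : nat) : R :=
  match j with
  | O => s
  | S k => let z := returns s k in switch_orbit g0 g1 t z (length (blk (b z)))
  end.

Hypothesis Hblock : forall z, D z ->
  D (switch_orbit g0 g1 t z (length (blk (b z)))) /\
  forall i, (i < length (blk (b z)))%nat ->
    letter t (switch_orbit g0 g1 t z i) = nth i (blk (b z)) false.

Lemma returns_block_coding s :
  D s -> (forall j, D (returns s j)) /\
  block_coding blk (itinerary g0 g1 t s) (fun j => b (returns s j)).
Proof.
  intros Hs.
  assert (H : forall j, switch_orbit g0 g1 t s (block_start blk (fun j => b (returns s j)) j)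
                        = returns s j /\ D (returns s j)).
  { induction j as [|j [E Dj]]; [split; auto|].
    cbn [block_start returns]. rewrite switch_orbit_add, E. split; [reflexivity|].
    now apply Hblock. }
  split; [intros j; apply H|].
  intros j i Hi. unfold itinerary. rewrite switch_orbit_add. destruct (H j) as [-> Dj].
  now apply Hblock.
Qed.

End Returns.

End SwitchOrbit.

(* [g0] on [[s, t]] and [g1] on [[t, u]] glue to a map of [[s, u)] into itself; its orbit of
   [s] is [switch_orbit g0 g1 t s]. *)
Record contraction_pair (g0 g1 : R -> R) (s t u : R) : Prop := {
  pair_s_lt_t : s < t;
  pair_t_lt_u : t < u;
  pair_g0 : increasing_contraction g0 s t;
  pair_g1 : increasing_contraction g1 t u;
  pair_g0_t : g0 t = u;
  pair_g1_t : g1 t = s }.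

Definition pair_itinerary (c : nat -> bool) : Prop :=
  exists g0 g1 s t u, contraction_pair g0 g1 s t u /\ c = itinerary g0 g1 t s.

Lemma induced_pair_itinerary (G g0' g1' : R -> R) (s v t : R) (zs : nat -> R) :
  increasing_contraction G s v ->
  zs 0%nat = s -> (forall n, s <= zs n < v) ->
  (forall n, zs (S n) = phik g0' g1' (letter t (G (zs n))) (zs n)) ->
  (forall t', s < t' < v -> G t' = t -> contraction_pair g0' g1' s t' v) ->
  ~ constant (fun n => letter t (G (zs n))) ->
  pair_itinerary (fun n => letter t (G (zs n))).
Proof.
  intros HG H0 Hrange Hrec Hpair Hnc.
  assert (Hsplit : exists z1 z2, s <= z1 < v /\ s <= z2 < v /\ t <= G z1 /\ G z2 < t).
  { apply not_all_ex_not in Hnc as [n Hn].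
    pose proof (Hrange n) as Hn'. pose proof (Hrange 0%nat) as H0'.
    unfold letter in Hn. destruct (Rle_dec t (G (zs n))), (Rle_dec t (G (zs 0%nat)));
      try congruence; [exists (zs n), (zs 0%nat) | exists (zs 0%nat), (zs n)]; lra. }
  destruct Hsplit as (z1 & z2 & Hz1 & Hz2 & H1 & H2).
  destruct (increasing_contraction_threshold G s v t z1 z2) as (t' & Ht' & Et' & Hletter);
    [exact HG | lra | lra | exact H1 | exact H2 |].
  exists g0', g1', s, t', v. split; [apply Hpair; [lra | exact Et']|].
  assert (Hl : forall n, letter t (G (zs n)) = letter t' (zs n))
    by (intros n; apply Hletter; pose proof (Hrange n); lra).
  apply functional_extensionality. intros n. unfold itinerary. rewrite Hl, <- H0. f_equal.
  apply switch_orbit_recurrence. intros m. now rewrite Hrec, Hl.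
Qed.

Section Pair.

Variables (g0 g1 : R -> R) (s t u : R).
Hypothesis Hpair : contraction_pair g0 g1 s t u.

Let Hst := pair_s_lt_t _ _ _ _ _ Hpair.
Let Htu := pair_t_lt_u _ _ _ _ _ Hpair.
Let Hg0 := pair_g0 _ _ _ _ _ Hpair.
Let Hg1 := pair_g1 _ _ _ _ _ Hpair.
Let Hg0t := pair_g0_t _ _ _ _ _ Hpair.
Let Hg1t := pair_g1_t _ _ _ _ _ Hpair.

Lemma g0_lower y : s <= y <= t -> y + (u - t) <= g0 y.
Proof. intros Hy. destruct (increasing_contraction_le g0 s t y t Hg0); lra. Qed.

Lemma g0_upper y : s <= y <= t -> g0 y <= u.
Proof. intros Hy. destruct (increasing_contraction_le g0 s t y t Hg0); lra. Qed.

Lemma g0_upper_strict y : s <= y < t -> g0 y < u.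
Proof. intros Hy. destruct (Hg0 y t); lra. Qed.

Lemma g1_lower y : t <= y <= u -> s <= g1 y.
Proof. intros Hy. destruct (increasing_contraction_le g1 t u t y Hg1); lra. Qed.

Lemma g1_upper y : t <= y <= u -> g1 y <= y - (t - s).
Proof. intros Hy. destruct (increasing_contraction_le g1 t u t y Hg1); lra. Qed.

Lemma g1_upper_strict y : t <= y < u -> g1 y < g1 u.
Proof. intros Hy. destruct (Hg1 y u); lra. Qed.

Lemma switch_orbit_range z : s <= z < u -> forall n, s <= switch_orbit g0 g1 t z n < u.
Proof.
  intros Hz n. induction n as [|n IH]; [exact Hz|]. simpl.
  set (y := switch_orbit g0 g1 t z n) in *. unfold letter. destruct (Rle_dec t y); simpl.
  - pose proof (g1_lower y). pose proof (g1_upper y). lra.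
  - pose proof (g0_lower y). pose proof (g0_upper_strict y). lra.
Qed.

Lemma iter_g0_range z k :
  s <= z -> (forall i, (i < k)%nat -> Nat.iter i g0 z < t) ->
  z <= Nat.iter k g0 z /\ ((0 < k)%nat -> Nat.iter k g0 z < u).
Proof.
  intros Hz Hk. induction k as [|k IH]; [simpl; split; [lra | lia]|].
  destruct IH as [IH _]; [intros i Hi; apply Hk; lia|].
  assert (Hlt : Nat.iter k g0 z < t) by (apply Hk; lia).
  rewrite Nat.iter_succ. pose proof (g0_lower (Nat.iter k g0 z)).
  pose proof (g0_upper_strict (Nat.iter k g0 z)). split; [lra | intros _; lra].
Qed.

Lemma iter_g0_increasing z k :
  s <= z -> (forall i, (i < k)%nat -> Nat.iter i g0 z < t) ->
  forall i, (i <= k)%nat -> Nat.iter i g0 z <= Nat.iter k g0 z.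
Proof.
  intros Hz. induction k as [|k IH]; intros Hk i Hi; [replace i with 0%nat by lia; lra|].
  assert (Hle : Nat.iter k g0 z <= Nat.iter (S k) g0 z).
  { destruct (iter_g0_range z k Hz) as [Hzk _]; [intros j Hj; apply Hk; lia|].
    rewrite Nat.iter_succ. pose proof (g0_lower (Nat.iter k g0 z)).
    assert (Nat.iter k g0 z < t) by (apply Hk; lia). lra. }
  destruct (Nat.eq_dec i (S k)) as [->|Hne]; [lra|].
  pose proof (IH (fun j Hj => Hk j ltac:(lia)) i ltac:(lia)). lra.
Qed.

Lemma iter_g0_mono y z k :
  s <= y <= z -> (forall i, (i < k)%nat -> Nat.iter i g0 z <= t) ->
  Nat.iter k g0 y <= Nat.iter k g0 z /\ Nat.iter k g0 z - Nat.iter k g0 y <= z - y /\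
  s <= Nat.iter k g0 y.
Proof.
  intros Hyz Hk. induction k as [|k IH]; [simpl; lra|].
  destruct IH as (H1 & H2 & H3); [intros i Hi; apply Hk; lia|].
  assert (Hkt : Nat.iter k g0 z <= t) by (apply Hk; lia).
  rewrite !Nat.iter_succ.
  destruct (increasing_contraction_le g0 s t (Nat.iter k g0 y) (Nat.iter k g0 z) Hg0); try lra.
  pose proof (g0_lower (Nat.iter k g0 y)). lra.
Qed.

Lemma iter_g1_range y k :
  y <= u -> (forall i, (i < k)%nat -> t <= Nat.iter i g1 y) ->
  Nat.iter k g1 y <= y /\ ((0 < k)%nat -> s <= Nat.iter k g1 y).
Proof.
  intros Hy Hk. induction k as [|k IH]; [simpl; split; [lra | lia]|].
  destruct IH as [IH _]; [intros i Hi; apply Hk; lia|].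
  assert (Hge : t <= Nat.iter k g1 y) by (apply Hk; lia).
  rewrite Nat.iter_succ. pose proof (g1_lower (Nat.iter k g1 y)).
  pose proof (g1_upper (Nat.iter k g1 y)). split; [lra | intros _; lra].
Qed.

Lemma iter_g1_mono y z k :
  y <= z <= u -> (forall i, (i < k)%nat -> t <= Nat.iter i g1 y) ->
  Nat.iter k g1 y <= Nat.iter k g1 z <= u.
Proof.
  intros Hyz Hk. induction k as [|k IH]; [simpl; lra|].
  destruct IH as [H1 H2]; [intros i Hi; apply Hk; lia|].
  assert (Hky : t <= Nat.iter k g1 y) by (apply Hk; lia).
  rewrite !Nat.iter_succ.
  destruct (increasing_contraction_le g1 t u (Nat.iter k g1 y) (Nat.iter k g1 z) Hg1); try lra.
  pose proof (g1_upper (Nat.iter k g1 z)). lra.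
Qed.

Lemma s_lt_g1u : s < g1 u.
Proof. destruct (Hg1 t u); lra. Qed.

Lemma g1u_sub_s : g1 u - s < u - t.
Proof. destruct (Hg1 t u); lra. Qed.

Section LCase.

Hypothesis HL : g1 u <= t.

(* [Nat.iter p g0 z] is where the orbit of [z] in [[s, g1 u)] leaves the left branch (possibly
   after one more step of [g0]). *)
Lemma L_return_data : exists p, (1 <= p)%nat /\
  (forall z, s <= z < g1 u -> forall j, (j < p)%nat -> Nat.iter j g0 z < t) /\
  (forall z, s <= z < g1 u -> Nat.iter p g0 z < t -> t <= Nat.iter (S p) g0 z) /\
  ((Nat.iter p g0 s < t /\ forall z, s <= z <= g1 u -> forall j, (j < p)%nat -> Nat.iter j g0 z < t)
   \/ forall z, s <= z < g1 u -> t <= Nat.iter p g0 z).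
Proof.
  pose proof s_lt_g1u. pose proof g1u_sub_s.
  destruct (least_witness (fun n => t <= Nat.iter n g0 s)) as (q & Hq & Hmin).
  { destruct (escape_up g0 s t (u - t)) as [n Hn]; [lra | apply g0_lower | exists n; lra]. }
  assert (Hbelow : forall j, (j < q)%nat -> Nat.iter j g0 s < t).
  { intros j Hj. apply Rnot_le_lt. intros Hle. specialize (Hmin j Hle). lia. }
  destruct q as [|[|r]]; [simpl in Hq; lra | |].
  - assert (Hright : forall z, s <= z <= g1 u -> t <= g0 z).
    { intros z Hz. destruct (increasing_contraction_le g0 s t s z Hg0); simpl in Hq; lra. }
    exists 1%nat. split; [lia|]. split; [|split; [|right]].
    + intros z Hz j Hj. replace j with 0%nat by lia. simpl. lra.
    + intros z Hz Hlt. simpl in Hlt. pose proof (Hright z). lra.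
    + intros z Hz. apply Hright. lra.
  - (* The iterates of [z] stay within [u - t] of those of [s], which leave [[s, t)] in steps
       of at least [u - t]. *)
    assert (Key : forall z, s <= z <= g1 u -> forall j, (j <= r)%nat -> Nat.iter j g0 z < t).
    { intros z Hz j. induction j as [j IH] using (well_founded_induction lt_wf). intros Hj.
      destruct (iter_g0_mono s z j) as (_ & Hdiff & _); [lra | intros i Hi; left; apply IH; lia|].
      pose proof (iter_g0_increasing s r (Rle_refl s)
                    (fun i Hi => Hbelow i ltac:(lia)) j Hj) as Hsr.
      pose proof (Hbelow (S r) ltac:(lia)) as Hnext. rewrite Nat.iter_succ in Hnext.
      destruct (iter_g0_range s r (Rle_refl s) (fun i Hi => Hbelow i ltac:(lia))) as [Hsr' _].
      pose proof (g0_lower (Nat.iter r g0 s)). pose proof (Hbelow r ltac:(lia)). lra. }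
    exists (S r). split; [lia|]. split; [|split; [|left]].
    + intros z Hz j Hj. apply Key; lra || lia.
    + intros z Hz Hlt.
      destruct (iter_g0_mono s z (S (S r))) as (Hmono & _); [lra| |lra].
      intros i Hi. destruct (Nat.eq_dec i (S r)) as [->|Hne]; [lra|]. left. apply Key; lra || lia.
    + split; [apply Hbelow; lia|]. intros z Hz j Hj. apply Key; lra || lia.
Qed.

Definition L_induced0 (p : nat) (z : R) : R := g1 (g0 (Nat.iter p g0 z)).
Definition L_induced1 (p : nat) (z : R) : R := g1 (Nat.iter p g0 z).

Section LBlock.

Variable p : nat.
Hypothesis Hp : (1 <= p)%nat.
Hypothesis HL1 : forall z, s <= z < g1 u -> forall j, (j < p)%nat -> Nat.iter j g0 z < t.
Hypothesis HL2 : forall z, s <= z < g1 u -> Nat.iter p g0 z < t -> t <= Nat.iter (S p) g0 z.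

Lemma L_block z : s <= z < g1 u ->
  let b := letter t (Nat.iter p g0 z) in
  let z' := switch_orbit g0 g1 t z (length (blockL p b)) in
  (forall i, (i < length (blockL p b))%nat ->
     letter t (switch_orbit g0 g1 t z i) = nth i (blockL p b) false) /\
  z' = phik (L_induced0 p) (L_induced1 p) b z /\ s <= z' < g1 u.
Proof.
  intros Hz b z'. set (k := if b then p else S p).
  assert (Hblock : blockL p b = repeat false k ++ [true]) by (unfold k; now destruct b).
  assert (Hk : forall i, (i < k)%nat -> Nat.iter i g0 z < t).
  { intros i Hi. destruct (Nat.eq_dec i p) as [->|Hne].
    - unfold k, b, letter in *. destruct Rle_dec; [lia | lra].
    - apply HL1; [lra | unfold k in Hi; destruct b; lia]. }
  assert (Htk : t <= Nat.iter k g0 z).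
  { unfold k, b, letter. destruct Rle_dec; [assumption | apply HL2; lra]. }
  assert (Hland : Nat.iter k g0 z < u).
  { apply (iter_g0_range z k); [lra | exact Hk | unfold k; destruct b; lia]. }
  destruct (block_zeros_one g0 g1 t z k Hk Htk) as [Hletters Hend].
  unfold z'. rewrite Hblock, length_app, repeat_length, Nat.add_1_r, Hend. split; [exact Hletters|].
  split.
  - unfold k, L_induced0, L_induced1. destruct b; [reflexivity | now rewrite Nat.iter_succ].
  - pose proof (g1_lower (Nat.iter k g0 z)). pose proof (g1_upper_strict (Nat.iter k g0 z)). lra.
Qed.

End LBlock.

Section LInduced.

Variable p : nat.
Hypothesis Hp : (1 <= p)%nat.
Hypothesis HL1_closed :
  forall z, s <= z <= g1 u -> forall j, (j < p)%nat -> Nat.iter j g0 z < t.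

Lemma L_iter_contraction : increasing_contraction (Nat.iter p g0) s (g1 u).
Proof.
  pose proof s_lt_g1u.
  destruct p as [|r]; [lia|].
  intros y z Hy Hyz Hz. rewrite !Nat.iter_succ_r.
  apply (increasing_contraction_iter g0 g0 s (g1 u) s t r); [| exact Hg0 | | lra | lra | lra].
  - apply (increasing_contraction_sub g0 s t); [exact Hg0 | lra | lra].
  - intros j x Hj Hx. rewrite <- Nat.iter_succ_r.
    assert (Hlt : Nat.iter (S j) g0 x < t) by (apply HL1_closed; lra || lia).
    destruct (iter_g0_range x (S j)); [lra | intros i Hi; apply HL1_closed; lra || lia | lra].
Qed.

Hypothesis HL2 : forall z, s <= z < g1 u -> Nat.iter p g0 z < t -> t <= Nat.iter (S p) g0 z.

Lemma L_induced_pair t' :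
  s < t' < g1 u -> Nat.iter p g0 t' = t ->
  contraction_pair (L_induced0 p) (L_induced1 p) s t' (g1 u).
Proof.
  intros Ht' Et'. pose proof L_iter_contraction as HG.
  assert (Hrange : forall y, s <= y <= g1 u -> y <= Nat.iter p g0 y < u).
  { intros y Hy. destruct (iter_g0_range y p); [lra | intros; apply HL1_closed; lra || lia |].
    split; [assumption | auto]. }
  split; [lra | lra | | | unfold L_induced0; now rewrite Et', Hg0t
                           | unfold L_induced1; now rewrite Et', Hg1t].
  - apply (increasing_contraction_comp (fun z => g0 (Nat.iter p g0 z)) g1 s t' t u);
      [| exact Hg1 |].
    + apply (increasing_contraction_comp (Nat.iter p g0) g0 s t' s t); [| exact Hg0 |].
      * apply (increasing_contraction_sub _ s (g1 u)); [exact HG | lra | lra].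
      * intros y Hy. pose proof (Hrange y).
        destruct (increasing_contraction_le _ s (g1 u) y t' HG); lra.
    + intros y Hy. pose proof (Hrange y).
      destruct (increasing_contraction_le _ s (g1 u) y t' HG); try lra.
      split; [|apply g0_upper; lra].
      destruct (Req_dec (Nat.iter p g0 y) t) as [E|E]; [rewrite E; lra|].
      rewrite <- Nat.iter_succ. apply HL2; lra.
  - apply (increasing_contraction_comp (Nat.iter p g0) g1 t' (g1 u) t u); [| exact Hg1 |].
    + apply (increasing_contraction_sub _ s (g1 u)); [exact HG | lra | lra].
    + intros y Hy. pose proof (Hrange y).
      destruct (increasing_contraction_le _ s (g1 u) t' y HG); lra.
Qed.

End LInduced.

Lemma L_renormalization pi :
  min_period_word pi (itinerary g0 g1 t s) ->
  exists p pi' c', (1 <= p)%nat /\ pi = Lmorph p pi' /\ (length pi' < length pi)%nat /\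
    min_period_word pi' c' /\ (constant c' \/ pair_itinerary c').
Proof.
  intros Hpi. pose proof s_lt_g1u.
  destruct L_return_data as (p & Hp & HL1 & HL2 & HL3).
  set (b := fun z => letter t (Nat.iter p g0 z)).
  set (D := fun z => s <= z < g1 u).
  destruct (returns_block_coding g0 g1 t (blockL p) b D) with (s := s) as [HD Hcode];
    [intros z Hz; destruct (L_block p Hp HL1 HL2 z Hz) as (H1 & _ & H3); now split
    | unfold D; lra |].
  set (zs := returns g0 g1 t (blockL p) b s) in *.
  set (c' := fun j => b (zs j)) in *.
  assert (Hfirst : c' 0%nat = false \/ forall j, c' j = true).
  { destruct HL3 as [[Hs _] | Hall]; [left; now apply letter_false | right].
    intros j. apply letter_true, Hall, HD. }
  destruct (min_period_word_Lmorph p _ c' Hp Hcode pi Hfirst Hpi) as (pi' & Hpi' & Hlen & ->).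
  exists p, pi', c'. do 3 (split; [assumption || reflexivity|]). split; [exact Hpi'|].
  destruct HL3 as [[_ Hclosed] | Hall].
  - destruct (classic (constant c')) as [Hc | Hnc]; [now left | right].
    apply (induced_pair_itinerary (Nat.iter p g0) (L_induced0 p) (L_induced1 p) s (g1 u) t zs);
      [ apply L_iter_contraction; assumption | reflexivity | exact HD | | | exact Hnc].
    + intros n. change (zs (S n)) with (switch_orbit g0 g1 t (zs n) (length (blockL p (b (zs n))))).
      now destruct (L_block p Hp HL1 HL2 (zs n) (HD n)) as (_ & E & _).
    + intros t' Ht' Et'. now apply L_induced_pair.
  - left. intros j. unfold c', b. rewrite !letter_true; [reflexivity | apply Hall, HD ..].
Qed.

End LCase.

Section RCase.

Hypothesis HR : t < g1 u.

Lemma t_lt_g0s : t < g0 s.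
Proof. destruct (Hg1 t u), (Hg0 s t); lra. Qed.

Definition R_induced0 (p : nat) (z : R) : R := Nat.iter p g1 (g0 z).
Definition R_induced1 (p : nat) (z : R) : R := g1 (R_induced0 p z).

Section RInduced.

Variable p : nat.
Hypothesis HR1 : forall z, s <= z <= t -> forall j, (j < p)%nat -> t <= Nat.iter j g1 (g0 z).

Lemma R_iter_contraction : increasing_contraction (R_induced0 p) s t.
Proof.
  apply (increasing_contraction_iter g0 g1 s t t u p Hg0 Hg1).
  intros j y Hj Hy. split; [apply HR1; lra || lia|].
  pose proof (g0_upper y Hy).
  destruct (iter_g1_range (g0 y) j); [lra | intros i Hi; apply HR1; lra || lia | lra].
Qed.

Hypothesis Hp : (1 <= p)%nat.

Lemma R_induced0_range z : s <= z <= t -> s <= R_induced0 p z <= u.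
Proof.
  intros Hz. pose proof (g0_upper z Hz).
  destruct (iter_g1_range (g0 z) p) as [H1 H2]; [lra | intros j Hj; apply HR1; lra || lia |].
  unfold R_induced0. split; [apply H2; lia | lra].
Qed.

Lemma R_induced_pair t' :
  s < t' < t -> R_induced0 p t' = t -> contraction_pair (R_induced0 p) (R_induced1 p) s t' t.
Proof.
  intros Ht' Et'. pose proof R_iter_contraction as HG.
  split; [lra | lra | | | exact Et' | unfold R_induced1; now rewrite Et', Hg1t].
  - apply (increasing_contraction_sub _ s t); [exact HG | lra | lra].
  - apply (increasing_contraction_comp (R_induced0 p) g1 t' t t u); [| exact Hg1 |].
    + apply (increasing_contraction_sub _ s t); [exact HG | lra | lra].
    + intros y Hy. pose proof (R_induced0_range y).
      destruct (increasing_contraction_le _ s t t' y HG); lra.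
Qed.

End RInduced.

Lemma R_return_data : exists p, (1 <= p)%nat /\
  (forall z, s <= z <= t -> forall j, (j < p)%nat -> t <= Nat.iter j g1 (g0 z)) /\
  (forall z, s <= z < t -> t <= R_induced0 p z -> g1 (R_induced0 p z) < t).
Proof.
  pose proof t_lt_g0s. pose proof (g0_upper s).
  destruct (least_witness (fun n => Nat.iter n g1 (g0 s) < t)) as (p & Hp & Hmin).
  { apply (escape_down g1 (g0 s) t (t - s)); [lra|].
    intros y Hy. apply g1_upper. lra. }
  assert (Habove : forall j, (j < p)%nat -> t <= Nat.iter j g1 (g0 s)).
  { intros j Hj. apply Rnot_lt_le. intros Hlt. specialize (Hmin j Hlt). lia. }
  assert (HR1 : forall z, s <= z <= t -> forall j, (j < p)%nat -> t <= Nat.iter j g1 (g0 z)).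
  { intros z Hz j Hj.
    destruct (increasing_contraction_le g0 s t s z Hg0); try lra.
    destruct (iter_g1_mono (g0 s) (g0 z) j); [pose proof (g0_upper z); lra | |].
    - intros i Hi. apply Habove. lia.
    - pose proof (Habove j Hj). lra. }
  destruct p as [|q]; [simpl in Hp; lra|].
  exists (S q). split; [lia|]. split; [exact HR1|].
  intros z Hz Hge. pose proof (R_iter_contraction (S q) HR1) as HG.
  destruct (increasing_contraction_le _ s t s z HG); try lra.
  pose proof (R_induced0_range (S q) HR1 ltac:(lia) z).
  pose proof (g1_upper (R_induced0 (S q) z)). unfold R_induced0 in *. lra.
Qed.

Section RBlock.

Variable p : nat.
Hypothesis Hp : (1 <= p)%nat.
Hypothesis HR1 : forall z, s <= z <= t -> forall j, (j < p)%nat -> t <= Nat.iter j g1 (g0 z).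
Hypothesis HR2 : forall z, s <= z < t -> t <= R_induced0 p z -> g1 (R_induced0 p z) < t.

Lemma R_block z : s <= z < t ->
  let b := letter t (R_induced0 p z) in
  let z' := switch_orbit g0 g1 t z (length (blockR p b)) in
  (forall i, (i < length (blockR p b))%nat ->
     letter t (switch_orbit g0 g1 t z i) = nth i (blockR p b) false) /\
  z' = phik (R_induced0 p) (R_induced1 p) b z /\ s <= z' < t.
Proof.
  intros Hz b z'. set (k := if b then S p else p).
  assert (Hblock : blockR p b = false :: repeat true k) by (unfold k; now destruct b).
  assert (Hk : forall i, (i < k)%nat -> t <= Nat.iter i g1 (g0 z)).
  { intros i Hi. destruct (Nat.eq_dec i p) as [->|Hne].
    - unfold k, b, letter in *. destruct Rle_dec; [assumption | lia].
    - apply HR1; [lra | unfold k in Hi; destruct b; lia]. }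
  destruct (block_zero_ones g0 g1 t z k (proj2 Hz) Hk) as [Hletters Hend].
  pose proof (R_induced0_range p HR1 Hp z).
  unfold z'. rewrite Hblock. cbn [length]. rewrite repeat_length, Hend.
  split; [exact Hletters|].
  unfold k, b, letter in *. destruct Rle_dec as [Hge|Hlt]; split; try reflexivity.
  - rewrite Nat.iter_succ. fold (R_induced0 p z).
    pose proof (HR2 z Hz Hge). pose proof (g1_lower (R_induced0 p z)). lra.
  - fold (R_induced0 p z). lra.
Qed.

End RBlock.

Lemma R_renormalization pi :
  min_period_word pi (itinerary g0 g1 t s) ->
  exists p pi' c', (1 <= p)%nat /\ pi = Rmorph p pi' /\ (length pi' < length pi)%nat /\
    min_period_word pi' c' /\ (constant c' \/ pair_itinerary c').
Proof.
  intros Hpi.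
  destruct R_return_data as (p & Hp & HR1 & HR2).
  set (b := fun z => letter t (R_induced0 p z)).
  set (D := fun z => s <= z < t).
  destruct (returns_block_coding g0 g1 t (blockR p) b D) with (s := s) as [HD Hcode];
    [intros z Hz; destruct (R_block p Hp HR1 HR2 z Hz) as (H1 & _ & H3); now split
    | unfold D; lra |].
  set (zs := returns g0 g1 t (blockR p) b s) in *.
  set (c' := fun j => b (zs j)) in *.
  destruct (min_period_word_Rmorph p _ c' Hp Hcode pi Hpi) as (pi' & Hpi' & Hlen & ->).
  exists p, pi', c'. do 3 (split; [assumption || reflexivity|]). split; [exact Hpi'|].
  destruct (classic (constant c')) as [Hc | Hnc]; [now left | right].
  apply (induced_pair_itinerary (R_induced0 p) (R_induced0 p) (R_induced1 p) s t t zs);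
    [ apply R_iter_contraction; assumption | reflexivity | exact HD | | | exact Hnc].
  - intros n. change (zs (S n)) with (switch_orbit g0 g1 t (zs n) (length (blockR p (b (zs n))))).
    now destruct (R_block p Hp HR1 HR2 (zs n) (HD n)) as (_ & E & _).
  - intros t' Ht' Et'. now apply R_induced_pair.
Qed.

End RCase.

Lemma pair_renormalization pi :
  min_period_word pi (itinerary g0 g1 t s) ->
  exists p pi' c', (1 <= p)%nat /\ (pi = Lmorph p pi' \/ pi = Rmorph p pi') /\
    (length pi' < length pi)%nat /\ min_period_word pi' c' /\ (constant c' \/ pair_itinerary c').
Proof.
  intros Hpi. destruct (Rle_lt_dec (g1 u) t) as [HL | HR].
  - destruct (L_renormalization HL pi Hpi) as (p & pi' & c' & Hp & E & Hrest).
    exists p, pi', c'. auto.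
  - destruct (R_renormalization HR pi Hpi) as (p & pi' & c' & Hp & E & Hrest).
    exists p, pi', c'. auto.
Qed.

End Pair.

Theorem pair_itinerary_valid c pi : pair_itinerary c -> min_period_word pi c -> valid pi.
Proof.
  remember (length pi) as n eqn:En. revert c pi En.
  induction n as [n IH] using (well_founded_induction lt_wf). intros c pi En Hc Hpi.
  destruct Hc as (g0 & g1 & s & t & u & Hpair & ->).
  destruct (pair_renormalization g0 g1 s t u Hpair pi Hpi)
    as (p & pi' & c' & Hp & Hmorph & Hlen & Hpi' & Hc').
  assert (Hvalid : valid pi').
  { destruct Hc' as [Hconst | Hc']; [exact (min_period_word_constant_valid c' pi' Hconst Hpi')|].
    apply (IH (length pi')) with (c := c'); [lia | reflexivity | exact Hc' | exact Hpi']. }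
  destruct Hmorph as [-> | ->]; [apply validL | apply validR]; assumption.
Qed.

Lemma orbit_succ phi0 phi1 x n :
  orbit phi0 phi1 x (S n) = phik phi0 phi1 (letter x (orbit phi0 phi1 x n)) (orbit phi0 phi1 x n).
Proof. simpl. unfold letter. now destruct Rle_dec. Qed.

Lemma threshold_word_constant_valid phi0 phi1 x pi b :
  threshold_word phi0 phi1 x pi -> (forall n, letter x (orbit phi0 phi1 x n) = b) -> valid pi.
Proof.
  intros [[Hne _] Hmin] Hb. apply valid_of_length_one; [exact Hne|].
  apply (Hmin [b]). split; [discriminate|].
  intros n. rewrite orbit_succ, Hb. unfold omega_letter. simpl length. now rewrite Nat.mod_1_r.
Qed.

(* Away from the fixed points the two branches separate, so the orbit determines its letters. *)
Lemma threshold_word_min_period_word phi0 phi1 x pi :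
  (forall n, phi1 (orbit phi0 phi1 x n) < orbit phi0 phi1 x n < phi0 (orbit phi0 phi1 x n)) ->
  threshold_word phi0 phi1 x pi -> min_period_word pi (fun n => letter x (orbit phi0 phi1 x n)).
Proof.
  intros Hsep.
  assert (Hiff : forall w, generates_orbit phi0 phi1 x w <->
                           period_word w (fun n => letter x (orbit phi0 phi1 x n))).
  { intros w. split; intros [Hne Hw]; split; auto; intros n; specialize (Hw n);
      rewrite orbit_succ in *; pose proof (Hsep n).
    - destruct (letter _ _), (omega_letter w n); simpl in Hw; auto; lra.
    - now rewrite Hw. }
  intros [Hpi Hmin]. split; [now apply Hiff|].
  intros w' Hw'. apply Hmin, Hiff, Hw'.
Qed.

Section Threshold.

Variables (I : R -> Prop) (phi0 phi1 : R -> R) (x y0 y1 : R).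
Hypothesis HI : is_interval I.
Hypothesis Hmaps : forall k y, I y -> I (phik phi0 phi1 k y).
Hypothesis Hcontr : forall k y z, I y -> I z -> y < z ->
  phik phi0 phi1 k y < phik phi0 phi1 k z /\ phik phi0 phi1 k z - phik phi0 phi1 k y < z - y.
Hypothesis Ix : I x.
Hypotheses (Iy0 : I y0) (Iy1 : I y1) (Hfix0 : phi0 y0 = y0) (Hfix1 : phi1 y1 = y1).
Hypothesis Hfix_lt : y1 < y0.

Lemma orbit_in_I n : I (orbit phi0 phi1 x n).
Proof.
  induction n as [|n IH]; [exact (Hmaps true x Ix)|].
  rewrite orbit_succ. now apply Hmaps.
Qed.

Lemma phik_toward_fixed k y f :
  I y -> I f -> phik phi0 phi1 k f = f ->
  (y < f -> y < phik phi0 phi1 k y < f) /\ (f < y -> f < phik phi0 phi1 k y < y).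
Proof.
  intros Iy If Hf. split; intros Hlt.
  - destruct (Hcontr k y f); auto; lra.
  - destruct (Hcontr k f y); auto; lra.
Qed.

Lemma orbit_above : x <= y1 -> forall n, letter x (orbit phi0 phi1 x n) = true.
Proof.
  intros Hx.
  assert (Hup : forall y, I y -> x <= y -> x <= phi1 y).
  { intros y Iy Hxy. destruct (phik_toward_fixed true y y1 Iy Iy1 Hfix1) as [H1 H2]; simpl in *.
    destruct (Rtotal_order y y1) as [Hlt | [-> | Hgt]];
      [specialize (H1 Hlt) | | specialize (H2 Hgt)]; lra. }
  intros n. apply letter_true. induction n as [|n IH]; [apply Hup; auto; lra|].
  rewrite orbit_succ, letter_true by exact IH. apply Hup; [apply orbit_in_I | exact IH].
Qed.

Lemma orbit_below : y0 <= x -> forall n, letter x (orbit phi0 phi1 x n) = false.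
Proof.
  intros Hx.
  assert (Hdown : forall y, I y -> y < x -> phi0 y < x).
  { intros y Iy Hyx. destruct (phik_toward_fixed false y y0 Iy Iy0 Hfix0) as [H1 H2]; simpl in *.
    destruct (Rtotal_order y y0) as [Hlt | [-> | Hgt]];
      [specialize (H1 Hlt) | | specialize (H2 Hgt)]; lra. }
  intros n. apply letter_false. induction n as [|n IH].
  - destruct (phik_toward_fixed true x y1 Ix Iy1 Hfix1) as [_ H]. simpl in *. apply H. lra.
  - rewrite orbit_succ, letter_false by exact IH. apply Hdown; [apply orbit_in_I | exact IH].
Qed.

Section Middle.

Hypothesis Hx : y1 < x < y0.

Lemma threshold_contraction_pair : contraction_pair phi0 phi1 (phi1 x) x (phi0 x).
Proof.
  destruct (phik_toward_fixed true x y1 Ix Iy1 Hfix1) as [_ H1].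
  destruct (phik_toward_fixed false x y0 Ix Iy0 Hfix0) as [H0 _].
  simpl in *. specialize (H1 (proj1 Hx)). specialize (H0 (proj2 Hx)).
  pose proof (Hmaps true x Ix). pose proof (Hmaps false x Ix). simpl in *.
  assert (Ileft : forall y, phi1 x <= y <= x -> I y)
    by (intros y Hy; apply (HI (phi1 x) y x); auto; lra).
  assert (Iright : forall y, x <= y <= phi0 x -> I y)
    by (intros y Hy; apply (HI x y (phi0 x)); auto; lra).
  split; [lra | lra | | | reflexivity | reflexivity]; intros y z Hy Hyz Hz.
  - apply (Hcontr false); [apply Ileft | apply Ileft |]; lra.
  - apply (Hcontr true); [apply Iright | apply Iright |]; lra.
Qed.

Lemma orbit_switch_orbit n : orbit phi0 phi1 x n = switch_orbit phi0 phi1 x (phi1 x) n.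
Proof.
  apply (switch_orbit_recurrence phi0 phi1 x (orbit phi0 phi1 x)). apply orbit_succ.
Qed.

Lemma orbit_separated n :
  phi1 (orbit phi0 phi1 x n) < orbit phi0 phi1 x n < phi0 (orbit phi0 phi1 x n).
Proof.
  pose proof threshold_contraction_pair as Hpair.
  destruct (switch_orbit_range _ _ _ _ _ Hpair (phi1 x)) with (n := n) as [Hs Hu];
    [destruct Hpair; lra|].
  rewrite <- orbit_switch_orbit in Hs, Hu.
  destruct (phik_toward_fixed true x y1 Ix Iy1 Hfix1) as [_ H1].
  destruct (phik_toward_fixed false x y0 Ix Iy0 Hfix0) as [H0 _].
  simpl in *. specialize (H1 (proj1 Hx)). specialize (H0 (proj2 Hx)).
  pose proof (orbit_in_I n) as In.
  destruct (phik_toward_fixed true _ y1 In Iy1 Hfix1) as [_ G1].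
  destruct (phik_toward_fixed false _ y0 In Iy0 Hfix0) as [G0 _].
  simpl in *. split; [apply G1 | apply G0]; lra.
Qed.

Lemma threshold_pair_itinerary : pair_itinerary (fun n => letter x (orbit phi0 phi1 x n)).
Proof.
  exists phi0, phi1, (phi1 x), x, (phi0 x). split; [exact threshold_contraction_pair|].
  apply functional_extensionality. intros n. unfold itinerary. now rewrite orbit_switch_orbit.
Qed.

End Middle.

Lemma threshold_word_valid pi : threshold_word phi0 phi1 x pi -> valid pi.
Proof.
  intros Hpi. destruct (Rle_lt_dec x y1) as [Hx1 | Hx1].
  { exact (threshold_word_constant_valid _ _ _ _ true Hpi (orbit_above Hx1)). }
  destruct (Rle_lt_dec y0 x) as [Hx0 | Hx0].
  { exact (threshold_word_constant_valid _ _ _ _ false Hpi (orbit_below Hx0)). }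
  apply (pair_itinerary_valid _ pi (threshold_pair_itinerary (conj Hx1 Hx0))).
  exact (threshold_word_min_period_word _ _ _ _ (orbit_separated (conj Hx1 Hx0)) Hpi).
Qed.

End Threshold.

Theorem mainTheorem8 (I : R -> Prop) (phi0 phi1 : R -> R) (x : R) (pi : list bool) :
  is_interval I ->
  A2 I phi0 phi1 ->
  I x ->
  threshold_word phi0 phi1 x pi ->
  valid pi.
Proof.
  intros HI (Hmaps & Hcontr & y0 & y1 & Iy0 & Iy1 & Hfix0 & Hfix1 & Hfix_lt) Ix.
  now apply (threshold_word_valid I phi0 phi1 x y0 y1).
Qed.
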